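(* For every message $M$ and all formulas $\phi,\psi$: $\vdash[M](\phi\to\psi)\to([M]\phi\to[M]\psi)$; $\vdash[M]\phi\to\langle M\rangle\phi$; $\vdash[M]\phi\to[M][M]\phi$; $\vdash\neg[M]\phi\to[M]\neg[M]\phi$; $\vdash[M]\big([M](\phi\vee\psi)\to([M]\phi\vee[M]\psi)\big)$; $\vdash\phi\to[M]\phi$; and if $\vdash\phi$ then $\vdash[M]\phi$. (That is, $[M]$ is a disjunctive KD45-modality of explicit belief of the agent $\mathsf{CM}$, with $\mathsf{CM}$ truth-believing.)
   Context: Fix a finite set $\mathcal{A}$ of agent names containing a distinguished name $\mathsf{CM}$. Messages: $M ::= a \mid B \mid (M,M)$ with $a\in\mathcal{A}$, $B$ optional application-specific data constants, $(M,M')$ pairs. $\mathcal{P}$ is a denumerable set of propositional variables containing atoms $\mathsf{k}_a(M)$ for all $a\in\mathcal{A}$ and messages $M$. Formulas: $\phi ::= P \mid \phi\wedge\phi \mid \phi\vee\phi \mid \neg\phi \mid \phi\to\phi \mid [M]\phi$. Abbreviations: $\mathrm{true}:=\mathsf{k}_{\mathsf{CM}}(\mathsf{CM})$, $\mathrm{false}:=\neg\mathrm{true}$, $\phi\leftrightarrow\psi:=(\phi\to\psi)\wedge(\psi\to\phi)$, $\langle M\rangle\phi:=\neg\neg(\mathsf{k}_{\mathsf{CM}}(M)\wedge\phi)$. LIiP is the smallest set of formulas that contains all instances of: the axioms of an adequate Hilbert axiomatization of intuitionistic propositional logic; $\mathsf{k}_a(a)$; $(\mathsf{k}_a(M)\wedge\mathsf{k}_a(M'))\leftrightarrow\mathsf{k}_a((M,M'))$;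 $[M]\mathsf{k}_{\mathsf{CM}}(M)$; $[M](\phi\to\psi)\to([M]\phi\to[M]\psi)$; $[M]\phi\to(\mathsf{k}_{\mathsf{CM}}(M)\to\phi)$; $[M]\phi\to\langle M\rangle\phi$; $\phi\to[M]\phi$; and is closed under modus ponens and the rule: if $\mathsf{k}_{\mathsf{CM}}(M)\to\mathsf{k}_{\mathsf{CM}}(M')$ is in the set then so is $[M']\phi\to[M]\phi$ for every $\phi$. Write $\vdash\phi$ for $\phi\in\mathrm{LIiP}$. *)

Set Implicit Arguments.

Section LIiP.
(* agent names (finite set with distinguished CM) and data constants are
   the parameters of the theory; they become explicit binders of the theorem. *)
Variable Agent : Type.
Variable CM : Agent.
Variable Data : Type.

Inductive msg : Type :=
  | MAgent : Agent -> msg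
  | MData : Data -> msg
  | MPair : msg -> msg -> msg.

(* propositional variables: a denumerable set of plain variables together
   with the knowledge atoms k_a(M) *)
Inductive pvar : Type :=
  | PV : nat -> pvar
  | Katom : Agent -> msg -> pvar.

Inductive form : Type :=
  | FVar : pvar -> form
  | FAnd : form -> form -> form
  | FOr : form -> form -> form
  | FNot : form -> form
  | FImp : form -> form -> form
  | FBox : msg -> form -> form.

Definition fK (a : Agent) (M : msg) : form := FVar (Katom a M).
Definition ftrue : form := fK CM (MAgent CM).
Definition ffalse : form := FNot ftrue.
Definition fIff (p q : form) : form := FAnd (FImp p q) (FImp q p).
Definition fDia (M : msg) (p : form) : form := FNot (FNot (FAnd (fK CM M) p)).

(* Intuitionistic propositional logic: a standard adequate Hilbert system
   (Kleene's axiomatization) with primitive negation. *)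
Inductive LIiP : form -> Prop :=
  | ax_K p q : LIiP (FImp p (FImp q p))
  | ax_S p q r : LIiP (FImp (FImp p (FImp q r)) (FImp (FImp p q) (FImp p r)))
  | ax_andI p q : LIiP (FImp p (FImp q (FAnd p q)))
  | ax_andE1 p q : LIiP (FImp (FAnd p q) p)
  | ax_andE2 p q : LIiP (FImp (FAnd p q) q)
  | ax_orI1 p q : LIiP (FImp p (FOr p q))
  | ax_orI2 p q : LIiP (FImp q (FOr p q))
  | ax_orE p q r : LIiP (FImp (FImp p r) (FImp (FImp q r) (FImp (FOr p q) r)))
  | ax_notI p q : LIiP (FImp (FImp p q) (FImp (FImp p (FNot q)) (FNot p)))
  | ax_notE p q : LIiP (FImp (FNot p) (FImp p q))
  | ax_self a : LIiP (fK a (MAgent a))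
  | ax_pair a M M' : LIiP (fIff (FAnd (fK a M) (fK a M')) (fK a (MPair M M')))
  | ax_trust M : LIiP (FBox M (fK CM M))
  | ax_boxK M p q : LIiP (FImp (FBox M (FImp p q)) (FImp (FBox M p) (FBox M q)))
  | ax_boxT M p : LIiP (FImp (FBox M p) (FImp (fK CM M) p))
  | ax_boxD M p : LIiP (FImp (FBox M p) (fDia M p))
  | ax_truthbel M p : LIiP (FImp p (FBox M p))
  | r_mp p q : LIiP (FImp p q) -> LIiP p -> LIiP q
  | r_epi M M' p : LIiP (FImp (fK CM M) (fK CM M')) ->
                   LIiP (FImp (FBox M' p) (FBox M p)).

End LIiP.

Arguments FBox {Agent Data}.
Arguments FImp {Agent Data}.
Arguments FNot {Agent Data}.
Arguments FOr {Agent Data}.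

(* Truth-belief [p -> [M]p] does most of the work: it gives necessitation,
   positive introspection and negative introspection outright.  For the
   disjunction property, [k_CM(M)] turns [[M](p \/ q)] into [p \/ q] (axiom T),
   and truth-belief turns each disjunct [p] back into [[M]p]; hence
   [k_CM(M) -> ([M](p \/ q) -> [M]p \/ [M]q)] is a theorem, and boxing it
   with the trust axiom [[M]k_CM(M)] discharges the antecedent. *)
From Stdlib Require Import Fin List.
Import ListNotations.

Section Derivations.
Variables (Agent : Type) (CM : Agent) (Data : Type).
Notation form := (form Agent Data).
Notation LIiP := (@LIiP Agent CM Data).

Inductive derivable (G : list form) : form -> Prop :=
  | derivable_thm p : LIiP p -> derivable G p
  | derivable_hyp p : In p G -> derivable G p
  | derivable_mp p q : derivable G (FImp p q) -> derivable G p -> derivable G q.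

Lemma LIiP_imp_refl p : LIiP (FImp p p).
Proof.
  eapply r_mp; [eapply r_mp; [apply (ax_S CM p (FImp p p) p) | apply ax_K] |].
  apply (ax_K CM p p).
Qed.

Lemma deduction G p q : derivable (p :: G) q -> derivable G (FImp p q).
Proof.
  induction 1 as [r Hr | r [<- | Hr] | r s _ IHrs _ IHr].
  - apply derivable_mp with r; apply derivable_thm; [apply ax_K | exact Hr].
  - apply derivable_thm, LIiP_imp_refl.
  - apply derivable_mp with r; [apply derivable_thm, ax_K | now apply derivable_hyp].
  - eapply derivable_mp; [eapply derivable_mp; [apply derivable_thm, ax_S |] |].
    + exact IHrs.
    + exact IHr.
Qed.

Lemma derivable_nil p : derivable [] p -> LIiP p.
Proof.
  induction 1 as [| r [] |]; [assumption | eapply r_mp; eassumption].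
Qed.

Lemma LIiP_mp2 {p q r} : LIiP (FImp p (FImp q r)) -> LIiP p -> LIiP q -> LIiP r.
Proof. intros Hpqr Hp Hq; exact (r_mp (r_mp Hpqr Hp) Hq). Qed.

Lemma LIiP_nec M p : LIiP p -> LIiP (FBox M p).
Proof. exact (r_mp (ax_truthbel CM M p)). Qed.

Lemma LIiP_box4 M p : LIiP (FImp (FBox M p) (FBox M (FBox M p))).
Proof. apply ax_truthbel. Qed.

Lemma LIiP_box5 M p : LIiP (FImp (FNot (FBox M p)) (FBox M (FNot (FBox M p)))).
Proof. apply ax_truthbel. Qed.

Lemma LIiP_known_box_disj M p q :
  LIiP (FImp (fK CM M) (FImp (FBox M (FOr p q)) (FOr (FBox M p) (FBox M q)))).
Proof.
  apply derivable_nil, deduction, deduction.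
  set (G := [FBox M (FOr p q); fK CM M]).
  assert (Hpq : derivable G (FOr p q)).
  { eapply derivable_mp; [eapply derivable_mp |];
      [apply derivable_thm, ax_boxT | apply derivable_hyp | apply derivable_hyp];
      simpl; auto. }
  assert (box_disjunct : forall r s,
            LIiP (FImp (FBox M r) s) -> derivable G (FImp r s)).
  { intros r s Hrs; apply deduction; eapply derivable_mp; [apply derivable_thm, Hrs |].
    eapply derivable_mp; [apply derivable_thm, ax_truthbel | apply derivable_hyp].
    simpl; auto. }
  eapply derivable_mp; [eapply derivable_mp; [eapply derivable_mp |] |].
  - apply derivable_thm, ax_orE.
  - apply box_disjunct, ax_orI1.
  - apply box_disjunct, ax_orI2.
  - exact Hpq.
Qed.

Lemma LIiP_box_disj M p q :
  LIiP (FBox M (FImp (FBox M (FOr p q)) (FOr (FBox M p) (FBox M q)))).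
Proof.
  exact (LIiP_mp2 (ax_boxK CM _ _ _) (LIiP_nec M _ (LIiP_known_box_disj M p q))
           (ax_trust CM M)).
Qed.

End Derivations.

Theorem corollary5 (n : nat) (CM : Fin.t n) (Data : Type) :
  forall (M : msg (Fin.t n) Data) (phi psi : form (Fin.t n) Data),
    LIiP CM (FImp (FBox M (FImp phi psi)) (FImp (FBox M phi) (FBox M psi))) /\
    LIiP CM (FImp (FBox M phi) (fDia CM M phi)) /\
    LIiP CM (FImp (FBox M phi) (FBox M (FBox M phi))) /\
    LIiP CM (FImp (FNot (FBox M phi)) (FBox M (FNot (FBox M phi)))) /\
    LIiP CM (FBox M (FImp (FBox M (FOr phi psi)) (FOr (FBox M phi) (FBox M psi)))) /\
    LIiP CM (FImp phi (FBox M phi)) /\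
    (LIiP CM phi -> LIiP CM (FBox M phi)).
Proof.
  intros M phi psi.
  split; [apply ax_boxK |].
  split; [apply ax_boxD |].
  split; [apply LIiP_box4 |].
  split; [apply LIiP_box5 |].
  split; [apply LIiP_box_disj |].
  split; [apply ax_truthbel |].
  apply LIiP_nec.
Qed.
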